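(* Let $H=\langle a,b \mid c=[b,a],\ [c,a]=[c,b]=1\rangle$. Let $f\colon H\to\mathbb{R}$ be a pseudo-Jensen function with $f(a)=f(b)=f(c)=0$. Then $f\equiv 0$.
   Context: $[x,y]=x^{-1}y^{-1}xy$. In $H$ every element is uniquely of the form $a^mb^nc^k$ with $m,n,k\in\mathbb{Z}$ ($H\cong UT(3,\mathbb{Z})$). A function $f\colon H\to\mathbb{R}$ is pseudo-Jensen if there is $\delta>0$ with $|f(xy)+f(xy^{-1})-2f(x)|\le\delta$ for all $x,y\in H$ and $f(x^n)=nf(x)$ for all $x\in H$, $n\in\mathbb{Z}$. *)

From Stdlib Require Import ZArith Reals Lia.
Open Scope Z_scope.

Record H := mkH { hm : Z; hn : Z; hk : Z }.   (* mkH m n k  =  a^m b^n c^k *)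

(* Since c is central and b a = a b c, we get b^n a^m' = a^m' b^n c^(n m'). *)
Definition hmul (x y : H) : H :=
  mkH (hm x + hm y) (hn x + hn y) (hk x + hk y + hn x * hm y).
Definition hone : H := mkH 0 0 0.
Definition hinv (x : H) : H := mkH (- hm x) (- hn x) (hn x * hm x - hk x).

Definition ha : H := mkH 1 0 0.
Definition hb : H := mkH 0 1 0.
Definition hc : H := mkH 0 0 1.

Definition hpow (x : H) (z : Z) : H :=
  match z with
  | Z0 => hone
  | Zpos p => Nat.iter (Pos.to_nat p) (hmul x) hone
  | Zneg p => hinv (Nat.iter (Pos.to_nat p) (hmul x) hone)
  end.

Definition hcomm (x y : H) : H := hmul (hmul (hinv x) (hinv y)) (hmul x y).

Lemma hc_is_comm_ba : hcomm hb ha = hc.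
Proof. reflexivity. Qed.
Lemma hc_central_a : hcomm hc ha = hone.
Proof. reflexivity. Qed.
Lemma hc_central_b : hcomm hc hb = hone.
Proof. reflexivity. Qed.

Close Scope Z_scope.
Open Scope R_scope.

Definition pseudo_Jensen (f : H -> R) : Prop :=
  (exists delta : R, delta > 0 /\
     forall x y : H, Rabs (f (hmul x y) + f (hmul x (hinv y)) - 2 * f x) <= delta)
  /\ (forall (x : H) (n : Z), f (hpow x n) = IZR n * f x).

(* The pseudo-Jensen bound applied to N-th powers, whose f-values grow linearly in N
   while the defect stays below delta, forces the exact equation
   f(xy) + f(xy^-1) = 2 f(x) whenever f cannot tell x^N y^(+-N) from (x y^(+-1))^N.
   This covers commuting pairs, which together with f(c) = 0 makes f invariant under
   the central translations; then it covers all pairs, since x^N y^N and (xy)^N differ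
   by a central element. Exact Jensen and f(x^-1) = -f(x) make f a homomorphism, so
   f(a^m b^n c^k) = m f(a) + n f(b) = 0. *)
From Stdlib Require Import ZArith Reals.
From Stdlib Require Import Lia Lra.
Open Scope R_scope.

Section HeisenbergGroup.
Local Open Scope Z_scope.

Lemma hmul_hone_r (x : H) : hmul x hone = x.
Proof. destruct x; unfold hmul, hone; simpl; f_equal; ring. Qed.

Lemma hinvK (x : H) : hinv (hinv x) = x.
Proof. destruct x; unfold hinv; simpl; f_equal; ring. Qed.

Lemma hinv_hmul_hinv_r (x y : H) : hinv (hmul x (hinv y)) = hmul y (hinv x).
Proof. destruct x, y; unfold hinv, hmul; simpl; f_equal; ring. Qed.

Lemma hmul_comm_coords (x y : H) :
  hmul x y = hmul y x -> hn x * hm y = hn y * hm x.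
Proof. destruct x, y; unfold hmul; simpl; intros E; injection E; lia. Qed.

Lemma hmul_comm_hinv_r (x y : H) :
  hmul x y = hmul y x -> hmul x (hinv y) = hmul (hinv y) x.
Proof.
  intros E; apply hmul_comm_coords in E; revert E.
  destruct x, y; unfold hmul, hinv; simpl; intros E; f_equal; lia.
Qed.

Lemma hmul_central_l (j : Z) (x : H) : hmul (mkH 0 0 j) x = hmul x (mkH 0 0 j).
Proof. destruct x; unfold hmul; simpl; f_equal; ring. Qed.

Fixpoint tri (N : nat) : Z :=
  match N with O => 0 | S N' => tri N' + Z.of_nat N' end.

Lemma tri_double (N : nat) : 2 * tri N = Z.of_nat N * (Z.of_nat N - 1).
Proof. induction N as [|N IH]; simpl tri; [reflexivity | lia]. Qed.

Lemma hpow_of_nat_iter (x : H) (N : nat) :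
  hpow x (Z.of_nat N) = Nat.iter N (hmul x) hone.
Proof.
  destruct N as [|N]; [reflexivity |].
  simpl Z.of_nat; unfold hpow; now rewrite SuccNat2Pos.id_succ.
Qed.

Lemma hpow_of_nat (x : H) (N : nat) :
  hpow x (Z.of_nat N) =
  mkH (Z.of_nat N * hm x) (Z.of_nat N * hn x)
      (Z.of_nat N * hk x + hn x * hm x * tri N).
Proof.
  rewrite hpow_of_nat_iter; destruct x as [m n k]; simpl hm; simpl hn; simpl hk.
  induction N as [|N IH]; [unfold hone; simpl; f_equal; ring |].
  simpl Nat.iter; rewrite IH; unfold hmul; simpl tri; rewrite Nat2Z.inj_succ; simpl.
  f_equal; ring.
Qed.

Lemma hpow_opp (x : H) (z : Z) : hpow x (- z) = hinv (hpow x z).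
Proof.
  destruct z as [|p|p]; simpl.
  - reflexivity.
  - reflexivity.
  - now rewrite hinvK.
Qed.

Lemma hpow_of_nat_hinv (x : H) (N : nat) :
  hpow (hinv x) (Z.of_nat N) = hinv (hpow x (Z.of_nat N)).
Proof.
  rewrite !hpow_of_nat; pose proof (tri_double N).
  destruct x; unfold hinv; simpl; f_equal; nia.
Qed.

Lemma hpow_of_nat_hmul_comm (x y : H) (N : nat) :
  hmul x y = hmul y x ->
  hpow (hmul x y) (Z.of_nat N) = hmul (hpow x (Z.of_nat N)) (hpow y (Z.of_nat N)).
Proof.
  intros E; apply hmul_comm_coords in E; revert E.
  rewrite !hpow_of_nat; pose proof (tri_double N).
  destruct x, y; unfold hmul; simpl; intros E; f_equal; nia.
Qed.

(* With [n m = 0] the correction term [n m tri N] of the powers vanishes. *)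
Lemma hpow_uncorrected (x : H) (z : Z) :
  hn x * hm x = 0 -> hpow x z = mkH (z * hm x) (z * hn x) (z * hk x).
Proof.
  intros Hx.
  destruct (Z_le_gt_dec 0 z) as [Hz | Hz].
  - rewrite <- (Z2Nat.id z Hz), hpow_of_nat, Hx; f_equal; ring.
  - replace z with (- Z.of_nat (Z.to_nat (- z))) by lia.
    rewrite hpow_opp, hpow_of_nat, Hx; unfold hinv; simpl; f_equal; nia.
Qed.

End HeisenbergGroup.

Lemma bounded_multiples_eq0 (d r : R) :
  (forall N : nat, Rabs (INR N * r) <= d) -> r = 0.
Proof.
  intros Hb; destruct (Req_dec r 0) as [| Hr]; [assumption |].
  assert (Hpos : 0 < Rabs r) by now apply Rabs_pos_lt.
  destruct (INR_unbounded (d / Rabs r)) as [N HN].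
  specialize (Hb N); rewrite Rabs_mult, Rabs_right in Hb by (apply Rle_ge, pos_INR).
  apply Rmult_lt_compat_r with (r := Rabs r) in HN; [| exact Hpos].
  unfold Rdiv in HN; rewrite Rmult_assoc, Rinv_l, Rmult_1_r in HN; lra.
Qed.

Section PseudoJensen.

Variable f : H -> R.
Hypothesis f_pJ : pseudo_Jensen f.

Lemma pJ_hpow_of_nat (x : H) (N : nat) : f (hpow x (Z.of_nat N)) = INR N * f x.
Proof. now rewrite (proj2 f_pJ), INR_IZR_INZ. Qed.

Lemma pJ_hinv (x : H) : f (hinv x) = - f x.
Proof.
  pose proof (proj2 f_pJ x (-1)%Z) as E.
  change (hpow x (-1)) with (hinv (hmul x hone)) in E.
  rewrite hmul_hone_r in E; rewrite E; lra.
Qed.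

(* The Jensen defect of (x^N, y^N) is N times that of (x, y) as soon as f does not
   distinguish x^N y^{±N} from (x y^{±1})^N; being bounded, it must vanish. *)
Lemma pJ_exact_of_powers (x y : H) :
  (forall N : nat, f (hmul (hpow x (Z.of_nat N)) (hpow y (Z.of_nat N)))
                   = f (hpow (hmul x y) (Z.of_nat N))) ->
  (forall N : nat, f (hmul (hpow x (Z.of_nat N)) (hinv (hpow y (Z.of_nat N))))
                   = f (hpow (hmul x (hinv y)) (Z.of_nat N))) ->
  f (hmul x y) + f (hmul x (hinv y)) = 2 * f x.
Proof.
  intros Hplus Hminus; destruct f_pJ as [[d [_ J]] _].
  enough (f (hmul x y) + f (hmul x (hinv y)) - 2 * f x = 0) by lra.
  apply (bounded_multiples_eq0 d); intros N.
  specialize (J (hpow x (Z.of_nat N)) (hpow y (Z.of_nat N))).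
  rewrite Hplus, Hminus, !pJ_hpow_of_nat in J.
  replace (INR N * (f (hmul x y) + f (hmul x (hinv y)) - 2 * f x))
    with (INR N * f (hmul x y) + INR N * f (hmul x (hinv y)) - 2 * (INR N * f x))
    by ring.
  exact J.
Qed.

Lemma pJ_exact_comm (x y : H) :
  hmul x y = hmul y x -> f (hmul x y) + f (hmul x (hinv y)) = 2 * f x.
Proof.
  intros E; apply pJ_exact_of_powers; intros N.
  - now rewrite hpow_of_nat_hmul_comm.
  - rewrite <- hpow_of_nat_hinv, hpow_of_nat_hmul_comm; [reflexivity |].
    now apply hmul_comm_hinv_r.
Qed.

Hypothesis f_hc : f hc = 0.

Lemma pJ_central (j : Z) : f (mkH 0 0 j) = 0.
Proof.
  rewrite <- (Z.mul_1_r j).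
  replace (mkH 0 0 (j * 1)) with (hpow hc j)
    by (rewrite hpow_uncorrected by reflexivity; simpl; f_equal; ring).
  rewrite (proj2 f_pJ), f_hc; ring.
Qed.

(* Jensen for the commuting pairs (x, c^j) and (c^j, x); the second one, read
   through x^-1 c^j = (x c^-j)^-1, says f(x c^j) = f(x c^-j). *)
Lemma pJ_hmul_central (x : H) (j : Z) : f (hmul x (mkH 0 0 j)) = f x.
Proof.
  pose proof (pJ_exact_comm x (mkH 0 0 j)
                (eq_sym (hmul_central_l j x))) as Eright.
  pose proof (pJ_exact_comm (mkH 0 0 j) x (hmul_central_l j x)) as Eleft.
  rewrite hmul_central_l, pJ_central in Eleft.
  replace (hmul (mkH 0 0 j) (hinv x)) with (hinv (hmul x (hinv (mkH 0 0 j))))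
    in Eleft by (destruct x; unfold hmul, hinv; simpl; f_equal; ring).
  rewrite pJ_hinv in Eleft; lra.
Qed.

Lemma pJ_abelianized (x y : H) : hm x = hm y -> hn x = hn y -> f x = f y.
Proof.
  intros Em En.
  replace y with (hmul x (mkH 0 0 (hk y - hk x)%Z))
    by (destruct x, y; unfold hmul; simpl in *; f_equal; lia).
  symmetry; apply pJ_hmul_central.
Qed.

Lemma pJ_exact (x y : H) : f (hmul x y) + f (hmul x (hinv y)) = 2 * f x.
Proof.
  apply pJ_exact_of_powers; intros N; apply pJ_abelianized;
    rewrite ?hpow_of_nat_hinv, !hpow_of_nat; destruct x, y; simpl; ring.
Qed.

Lemma pJ_hmul (x y : H) : f (hmul x y) = f x + f y.
Proof.
  pose proof (pJ_exact x y) as Exy; pose proof (pJ_exact y x) as Eyx.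
  rewrite <- hinv_hmul_hinv_r, pJ_hinv in Eyx.
  rewrite (pJ_abelianized (hmul y x) (hmul x y)) in Eyx
    by (destruct x, y; simpl; ring).
  lra.
Qed.

End PseudoJensen.

Theorem lemma3p8 (f : H -> R) :
  pseudo_Jensen f -> f ha = 0 -> f hb = 0 -> f hc = 0 ->
  forall x : H, f x = 0.
Proof.
  intros Hf Fa Fb Fc [m n k].
  assert (Ea : hpow ha m = mkH m 0 0)
    by (rewrite hpow_uncorrected by reflexivity; simpl; f_equal; ring).
  assert (Eb : hpow hb n = mkH 0 n 0)
    by (rewrite hpow_uncorrected by reflexivity; simpl; f_equal; ring).
  replace (mkH m n k) with (hmul (hmul (hpow ha m) (hpow hb n)) (mkH 0 0 k))
    by (rewrite Ea, Eb; unfold hmul; simpl; f_equal; ring).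
  rewrite pJ_hmul_central, pJ_hmul, !(proj2 Hf), Fa, Fb by assumption.
  ring.
Qed.
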